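(* Let $a<b$ be real numbers and $\varphi:(a,b)\to\mathbb R$ a continuous function. Then for almost every $x\in(a,b)$ one of the following holds: (i) $\varphi$ is differentiable at $x$; (ii) there is a sequence $(x_k)_{k\in\mathbb N}$ converging to $x$ such that $0\in\partial^-\varphi(x_k)$ for all $k$, in particular $0\in\partial^-_L\varphi(x)$.
   Context: For $y\in(a,b)$, the viscosity subdifferential $\partial^-\varphi(y)$ is the set of $p\in\mathbb R$ such that there is a $C^1$ function $\psi$ on an open neighborhood $V$ of $y$ with $\psi(y)=\varphi(y)$, $\psi\leq\varphi$ on $V$ and $\psi'(y)=p$. The limiting subdifferential $\partial^-_L\varphi(x)$ is the set of $p$ for which there is a sequence $(x_k,p_k)\to(x,p)$ with $p_k\in\partial^-\varphi(x_k)$. *)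

From HB Require Import structures.
From mathcomp Require Import all_boot all_order all_algebra.
From mathcomp Require Import all_classical all_reals all_analysis.
Set Implicit Arguments. Unset Strict Implicit. Unset Printing Implicit Defensive.
Import Order.TTheory GRing.Theory Num.Theory.
Import numFieldNormedType.Exports.
Local Open Scope classical_set_scope.
Local Open Scope ring_scope.

Definition C1_on {R : realType} (V : set R) (psi : R -> R) : Prop :=
  (forall z, V z -> derivable psi z 1) /\
  (forall z, V z -> {for z, continuous (derive1 psi)}).

Definition visc_subdiff {R : realType} (a b : R) (phi : R -> R) (y : R) : set R :=
  [set p | `]a, b[%classic y /\
     exists (V : set R) (psi : R -> R),
       [/\ open V, V y, V `<=` `]a, b[%classic & C1_on V psi] /\
       [/\ psi y = phi y,
           (forall z, V z -> psi z <= phi z) &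
           derive1 psi y = p]].

Definition lim_subdiff {R : realType} (a b : R) (phi : R -> R) (x : R) : set R :=
  [set p | exists (xs ps : nat -> R),
     [/\ xs @ \oo --> x, ps @ \oo --> p &
         forall k, visc_subdiff a b phi (xs k) (ps k)]].

(* Let Z be the set of points y with 0 in the viscosity subdifferential of phi at y; it
   contains every local minimum of phi. On the open set U = ]a, b[ minus the closure of Z,
   phi has no minimum in the interior of any segment, so on each component of U it is
   monotone near every point but at most one. By Lebesgue's theorem on monotone functions
   phi is differentiable almost everywhere on U, and the points of ]a, b[ outside U are
   limits of points of Z.
   Lebesgue's theorem is proved for continuous nondecreasing f with Riesz's rising sun
   lemma. If 0 <= p < q, the points where the left difference quotients fall below p and
   the right ones exceed q, for arbitrarily small increments, are covered inside any
   bounded open set O by an open subset of O of measure at most (p / q) |O|; iterating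
   shows that they form a null set. The same argument bounds the set where the right
   quotients are unbounded, and t |-> - f (- t) exchanges left and right. *)

From HB Require Import structures.
From mathcomp Require Import all_boot all_order all_algebra.
From mathcomp Require Import all_classical all_reals all_analysis.
From mathcomp Require Import lra.
Set Implicit Arguments. Unset Strict Implicit. Unset Printing Implicit Defensive.
Import Order.TTheory GRing.Theory Num.Theory.
Import numFieldNormedType.Exports.
Local Open Scope classical_set_scope.
Local Open Scope ring_scope.

Section open_components.
Context {R : realType}.

Lemma itvoo_near_left (c d e : R) : c < d -> 0 < e ->
  exists2 t, c < t < d & `|c - t| < e.
Proof.
move=> cd e0; set m := Num.min e (d - c).
have m0 : 0 < m by rewrite lt_min e0 subr_gt0.
have me : m <= e by rewrite ge_min lexx.
have mdc : m <= d - c by rewrite ge_min lexx orbT.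
exists (c + m / 2); first by apply/andP; split; lra.
by rewrite ltr_norml; apply/andP; split; lra.
Qed.

Lemma itvoo_near_right (c d e : R) : c < d -> 0 < e ->
  exists2 t, c < t < d & `|d - t| < e.
Proof.
move=> cd e0; set m := Num.min e (d - c).
have m0 : 0 < m by rewrite lt_min e0 subr_gt0.
have me : m <= e by rewrite ge_min lexx.
have mdc : m <= d - c by rewrite ge_min lexx orbT.
exists (d - m / 2); first by apply/andP; split; lra.
by rewrite ltr_norml; apply/andP; split; lra.
Qed.

Definition maximal_itv (O : set R) (c d : R) :=
  [/\ c < d, `]c, d[ `<=` O, ~ O c & ~ O d].

Lemma maximal_itv_opp (O : set R) (c d : R) :
  maximal_itv (-%R @^-1` O) c d -> maximal_itv O (- d) (- c).
Proof.
move=> [cd cdO Oc Od]; split => //; first by rewrite ltrN2.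
move=> t; rewrite /= in_itv /= => tdc; rewrite -[t]opprK; apply: cdO.
by rewrite /= in_itv /=; lra.
Qed.

Variables (O : set R) (oO : open O).
Local Notation I := (open_disjoint_itv oO).

Lemma open_disjoint_itv_sub k : I k `<=` O.
Proof. by move=> y Iy; rewrite (open_disjoint_itv_bigcup oO); exists k. Qed.

Lemma open_disjoint_itv_adherent k x : O x ->
  (forall e, 0 < e -> exists2 t, I k t & `|x - t| < e) -> I k x.
Proof.
rewrite {1}(open_disjoint_itv_bigcup oO) => -[j _ Ijx] adh.
have /nbhs_ballP[e /= e0 Ije] : nbhs x (I j).
  by apply: open_nbhs_nbhs; split => //; exact: open_disjoint_itv_open.
have [t Ikt xt] := adh e e0.
suff jk : j = k by rewrite -jk.
by apply: (@open_disjoint_itv_trivIset R O oO) => //; exists t; split => //; exact: Ije.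
Qed.

Lemma open_disjoint_itvE (al be : R) k : O `<=` `]al, be[ ->
  exists c d, I k = `]c, d[%classic /\
    (c < d -> [/\ maximal_itv O c d, al <= c & d <= be]).
Proof.
move=> Oab.
have Iab : I k `<=` `]al, be[ by move=> y /open_disjoint_itv_sub /Oab.
have Ik : I k = `]inf (I k), sup (I k)[%classic.
  rewrite -[LHS](proj1 (interior_id _) (@open_disjoint_itv_open _ _ oO k)).
  rewrite interval_bounded_interior ?set_itvoo //.
  - exact: open_disjoint_itv_is_interval.
  - by exists al => y /Iab; rewrite /= in_itv /= => /andP[/ltW].
  - by exists be => y /Iab; rewrite /= in_itv /= => /andP[_ /ltW].
exists (inf (I k)), (sup (I k)); split => // cd.
have inI t : inf (I k) < t < sup (I k) -> I k t by move=> tI; rewrite Ik /= in_itv.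
have Iin t : I k t -> inf (I k) < t < sup (I k) by rewrite {1}Ik /= in_itv.
have [x /inI Ix _] := itvoo_near_left cd ltr01.
have adhc e : 0 < e -> exists2 t, I k t & `|inf (I k) - t| < e.
  by move=> e0; have [t /inI ? ?] := itvoo_near_left cd e0; exists t.
have adhd e : 0 < e -> exists2 t, I k t & `|sup (I k) - t| < e.
  by move=> e0; have [t /inI ? ?] := itvoo_near_right cd e0; exists t.
split; [split => //| |].
- by rewrite -Ik; exact: open_disjoint_itv_sub.
- by move=> /open_disjoint_itv_adherent /(_ adhc) /Iin; rewrite ltxx.
- by move=> /open_disjoint_itv_adherent /(_ adhd) /Iin; rewrite ltxx andbF.
- apply: lb_le_inf; first by exists x.
  by move=> y /Iab; rewrite /= in_itv /= => /andP[/ltW].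
- apply: ge_sup; first by exists x.
  by move=> y /Iab; rewrite /= in_itv /= => /andP[_ /ltW].
Qed.

End open_components.

Section rising_sun.
Context {R : realType}.
Implicit Types (g : R -> R) (al be c d : R).

Definition shadow_right g al be : set R :=
  [set x | al < x < be /\ exists2 y, x < y <= be & g x < g y].

Definition shadow_left g al be : set R :=
  [set x | al < x < be /\ exists2 y, al <= y < x & g x < g y].

Lemma open_shadow_right g al be : continuous g -> open (shadow_right g al be).
Proof.
move=> cg.
have -> : shadow_right g al be = `]al, be[ `&`
    \bigcup_(y in [set y | y <= be]) ([set x | x < y] `&` g @^-1` [set z | z < g y]).
  apply/seteqP; split => x /=.
  - by move=> [xab [y /andP[xy yb] gxy]]; split; [rewrite in_itv | exists y].
  - rewrite in_itv /= => -[xab [y /= yb [/= xy gxy]]].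
    by split => //; exists y; rewrite ?xy.
apply: openI; first exact: itv_open.
apply: bigcup_open => y _; apply: openI; first exact: open_lt.
by apply: open_comp; [move=> ? _; exact: cg | exact: open_lt].
Qed.

Lemma shadow_leftE g al be :
  shadow_left g al be = -%R @^-1` shadow_right (g \o -%R) (- be) (- al).
Proof.
apply/seteqP; split => x /= [/andP[ax xb] [y /andP[y1 y2] gxy]].
- split; first by apply/andP; split; lra.
  by exists (- y); [apply/andP; split; lra | rewrite /= !opprK].
- split; first by apply/andP; split; lra.
  by exists (- y); [apply/andP; split; lra | move: gxy; rewrite /= opprK].
Qed.

Lemma open_shadow_left g al be : continuous g -> open (shadow_left g al be).
Proof.
move=> cg; rewrite shadow_leftE; apply: open_comp.
  by move=> x _; exact: oppr_continuous.
by apply: open_shadow_right => x; apply: continuous_comp; [exact: oppr_continuous | exact: cg].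
Qed.

Lemma shadow_right_le g al be c d : continuous g ->
  maximal_itv (shadow_right g al be) c d -> g c <= g d.
Proof.
move=> cg [cd sub nc nd].
have below_d x : c < x < d -> g x <= g d.
  move=> xcd; rewrite leNgt; apply/negP => gdx.
  have [/andP[ax xb] _] := sub x xcd.
  have [z] := @EVT_max _ g x be (ltW xb) (continuous_subspaceT cg).
  rewrite in_itv /= => /andP[xz zb] zmax.
  have gxz : g x <= g z by apply: zmax; rewrite in_itv /= lexx ltW.
  have [zd|dz] := ltP z d.
    have czd : c < z < d by rewrite zd andbT; case/andP: xcd => cx _; exact: lt_le_trans cx xz.
    have [_ [y /andP[zy yb] gzy]] := sub z czd.
    have := zmax y; rewrite in_itv /= yb (le_trans xz (ltW zy)) => /(_ isT).
    by rewrite leNgt gzy.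
  have gdz : g d < g z by apply: lt_le_trans gdx gxz.
  have dz' : d < z by rewrite lt_neqAle dz andbT; apply: contraTneq gdz => ->; rewrite ltxx.
  apply: nd; split; last by exists z; rewrite ?dz'.
  by move: xcd => /andP[_ xd]; apply/andP; split; lra.
rewrite leNgt; apply/negP => gdc.
have /nbhs_ballP[e /= e0 near_c] : nbhs c (g @^-1` [set y | g d < y]).
  by apply: cg; apply: open_nbhs_nbhs; split => //; exact: open_gt.
have [t tcd ct] := itvoo_near_left cd e0.
by move: (below_d t tcd); rewrite leNgt near_c.
Qed.

Lemma shadow_left_le g al be c d : continuous g ->
  maximal_itv (shadow_left g al be) c d -> g d <= g c.
Proof.
move=> cg; rewrite shadow_leftE => /maximal_itv_opp.
have cgN : continuous (g \o -%R).
  by move=> x; apply: continuous_comp; [exact: oppr_continuous | exact: cg].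
by move=> /(shadow_right_le cgN); rewrite /= !opprK.
Qed.

End rising_sun.

Section lebesgue_measure_lemmas.
Context {R : realType}.
Local Notation mu := (@lebesgue_measure R).

Lemma lebesgue_measure_itvoo (c d : R) : c <= d -> mu `]c, d[%classic = (d - c)%:E.
Proof.
rewrite lebesgue_measure_itv /= lte_fin le_eqVlt => /predU1P[->|->].
  by rewrite ltxx subrr.
by rewrite -EFinD.
Qed.

Lemma lebesgue_measure_itvoo_ge (c d : R) : ((d - c)%:E <= mu `]c, d[%classic)%E.
Proof.
have [cd|dc] := leP c d; first by rewrite lebesgue_measure_itvoo.
by apply: le_trans (measure_ge0 _ _); rewrite lee_fin subr_le0 ltW.
Qed.

Lemma measure_bigcup_nat (F : nat -> set R) : (forall k, measurable (F k)) ->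
  trivIset setT F -> mu (\bigcup_k F k) = (\sum_(0 <= k <oo) mu (F k))%E.
Proof.
move=> mF tF; rewrite measure_bigcup //; last by move=> k _; exact: mF.
by apply: eq_eseriesl => k; rewrite in_setT.
Qed.

Lemma itvoo_meet (c d c' d' : R) : Num.max c c' < Num.min d d' ->
  exists t, c < t < d /\ c' < t < d'.
Proof.
move=> lt_cd; have [t /andP[] ] := itvoo_near_left lt_cd ltr01.
by rewrite gt_max lt_min => /andP[ct c't] /andP[td td'] _; exists t; rewrite ct td c't td'.
Qed.

Lemma trivIset_itvoo_homo (f : R -> R) (c d : nat -> R) :
  {homo f : x y / x <= y} -> trivIset setT (fun k => `]c k, d k[%classic) ->
  trivIset setT (fun k => `]f (c k), f (d k)[%classic).
Proof.
move=> ndf tI j k _ _ [y []]; rewrite /= !in_itv /= => /andP[y1 y2] /andP[y3 y4].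
have lt_f u v : f u < f v -> u < v.
  by move=> fuv; rewrite ltNge; apply: contraTN fuv => /ndf; rewrite -leNgt.
have [t [tj tk]] : exists t, c j < t < d j /\ c k < t < d k.
  apply: itvoo_meet; rewrite gt_max !lt_min (lt_f _ _ (lt_trans y1 y2)).
  by rewrite (lt_f _ _ (lt_trans y3 y4)) (lt_f _ _ (lt_trans y1 y4)) (lt_f _ _ (lt_trans y3 y2)).
by apply: tI => //; exists t; rewrite /= !in_itv.
Qed.

Lemma component_growth_measure_le (f : R -> R) (O : set R) (oO : open O) (a b q : R) :
  {homo f : x y / x <= y} -> a <= b -> 0 <= q -> O `<=` `]a, b[ ->
  (forall c d, maximal_itv O c d -> q * (d - c) <= f d - f c) ->
  (q%:E * mu O <= (f b - f a)%:E)%E.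
Proof.
move=> ndf ab q0 Oab growth; set I := open_disjoint_itv oO.
have /choice[cd Icd] : forall k, exists p : R * R, I k = `]p.1, p.2[%classic /\
    (p.1 < p.2 -> [/\ maximal_itv O p.1 p.2, a <= p.1 & p.2 <= b]).
  by move=> k; have [c [d ?]] := open_disjoint_itvE oO k Oab; exists (c, d).
pose Y k := `]f (cd k).1, f (cd k).2[%classic.
have cd_lt k y : Y k y -> (cd k).1 < (cd k).2.
  rewrite /Y /= in_itv /= => /andP[y1 y2]; rewrite ltNge; apply: contraTN (lt_trans y1 y2).
  by move=> /ndf; rewrite leNgt.
have mY k : measurable (Y k) by exact: measurable_itv.
have tY : trivIset setT Y.
  apply: trivIset_itvoo_homo ndf _.
  have -> : (fun k => `](cd k).1, (cd k).2[%classic) = I by apply/funext => k; rewrite (Icd k).1.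
  exact: open_disjoint_itv_trivIset.
have IY k : (q%:E * mu (I k) <= mu (Y k))%E.
  rewrite (Icd k).1; have [lt_cd|] := ltP (cd k).1 (cd k).2; last first.
    by move=> dc; rewrite set_itv_ge ?measure0 ?mule0 //= bnd_simp -leNgt.
  have [mx _ _] := (Icd k).2 lt_cd.
  rewrite (lebesgue_measure_itvoo (ltW lt_cd)) -EFinM.
  by apply: le_trans _ (lebesgue_measure_itvoo_ge _ _); rewrite lee_fin growth.
rewrite {1}(open_disjoint_itv_bigcup oO) -/I measure_bigcup_nat //; last first.
- exact: open_disjoint_itv_trivIset.
- by move=> k; apply: measurable_realfun.open_measurable; exact: open_disjoint_itv_open.
rewrite -nneseriesZl; last by move=> k _; exact: measure_ge0.
apply: le_trans (lee_nneseries _ (fun k _ => IY k)) _.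
  by move=> k _ _; rewrite mule_ge0 // lee_fin.
rewrite -measure_bigcup_nat // -lebesgue_measure_itvoo ?ndf //.
apply: le_measure; rewrite ?inE; [exact: bigcupT_measurable | exact: measurable_itv |].
move=> y [k _ Yky]; have [_ ak kb] := (Icd k).2 (cd_lt k y Yky).
move: Yky; rewrite /Y /= !in_itv /= => /andP[y1 y2].
by rewrite (le_lt_trans (ndf _ _ ak) y1) (lt_le_trans y2 (ndf _ _ kb)).
Qed.

End lebesgue_measure_lemmas.

Section negligible_sets.
Context {R : realType}.
Local Notation mu := (@lebesgue_measure R).

Lemma negligible_oppr (A : set R) :
  mu.-negligible A -> mu.-negligible (-%R @^-1` A).
Proof.
move=> [B [mB B0 AB]]; exists (-%R @^-1` B); split.
- by rewrite -[X in measurable X]setTI; exact: measurable_realfun.oppr_measurable.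
- by have := lebesgue_measureN mB; rewrite /pushforward B0 => <-.
- by move=> x /AB.
Qed.

Lemma negligible_bigcup_countable (I : countType) (F : I -> set R) :
  (forall i, mu.-negligible (F i)) -> mu.-negligible (\bigcup_i F i).
Proof.
move=> nF; pose G n := if unpickle n is Some i then F i else set0.
apply: (@negligibleS _ _ _ mu (\bigcup_n G n)).
  by move=> x [i _ Fix]; exists (pickle i) => //; rewrite /G pickleK.
apply: negligible_bigcup => n; rewrite /G.
by case: unpickle => [i|]; [exact: nF | exact: negligible_set0].
Qed.

Lemma negligible_itvoo_nat (E : set R) :
  (forall n : nat, mu.-negligible (E `&` `](- n%:R), n%:R[)) -> mu.-negligible E.
Proof.
move=> nE; apply: (@negligibleS _ _ _ mu (\bigcup_n (E `&` `](- n%:R), n%:R[))).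
  move=> x Ex; exists (Num.Def.archi_bound `|x|) => //; split => //.
  by rewrite /= in_itv /= -ltr_norml; exact: archi_boundP.
exact: negligible_bigcup.
Qed.

Lemma le0_of_geometric (m p q C : R) : 0 <= p < q ->
  (forall k, q ^+ k * m <= p ^+ k * C) -> m <= 0.
Proof.
move=> /andP[p0 pq] H; have q0 : 0 < q by exact: le_lt_trans pq.
rewrite leNgt; apply/negP => m0.
have : (fun k => (p / q) ^+ k * C) @ \oo --> (0 : R).
  rewrite -(mul0r C); apply: cvgM; last exact: cvg_cst.
  apply: cvg_expr; rewrite ger0_norm ?divr_ge0 ?(ltW q0) //.
  by rewrite ltr_pdivrMr // mul1r.
move=> /cvgr_lt /(_ _ m0) [N _ /(_ N (leqnn N))] /=; apply/negP.
rewrite -leNgt exprMn exprVn mulrAC ler_pdivlMr ?exprn_gt0 // [m * _]mulrC.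
exact: H.
Qed.

Lemma negligible_geometric (E : set R) (p q C : R) : 0 <= p < q ->
  (forall k, exists T, [/\ measurable T, E `<=` T &
     ((q ^+ k)%:E * mu T <= (p ^+ k * C)%:E)%E]) ->
  mu.-negligible E.
Proof.
move=> pq /choice[T HT]; have mT k : measurable (T k) by case: (HT k).
have q0 : 0 <= q by case/andP: pq => p0 /ltW; exact: le_trans.
have mB : measurable (\bigcap_k T k) by exact: bigcapT_measurable.
exists (\bigcap_k T k); split => //; last by move=> x Ex k _; case: (HT k) => _ /(_ x Ex).
have bound k : ((q ^+ k)%:E * mu (\bigcap_k T k) <= (p ^+ k * C)%:E)%E.
  case: (HT k) => _ _; apply: le_trans; apply: lee_wpmul2l.
    by rewrite lee_fin exprn_ge0.
  by apply: le_measure; rewrite ?inE //; [exact: mT | move=> x /(_ k I)].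
apply/eqP; rewrite eq_le measure_ge0 andbT.
case: (mu _) bound => [m| |] bound; last by rewrite leNye.
  by rewrite lee_fin; apply: (le0_of_geometric pq) => k; rewrite -lee_fin EFinM.
by move: (bound 0%N); rewrite expr0 mul1e leye_eq.
Qed.

Definition shrinkable (E : set R) (k1 k2 : R) (O : set R) := exists U,
  [/\ open U, U `<=` O, E `&` O `<=` U & (k1%:E * mu U <= k2%:E * mu O)%E].

Lemma shrinkable_sub (E O S : set R) (k1 k2 : R) : 0 <= k2 ->
  measurable O -> measurable S -> S `<=` O -> E `&` O `<=` S ->
  shrinkable E k1 k2 S -> shrinkable E k1 k2 O.
Proof.
move=> k20 mO mS SO ES [U [oU US EU muU]]; exists U; split => //.
- by move=> x /US /SO.
- by move=> x [Ex Ox]; apply: EU; split => //; exact: ES.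
- apply: le_trans muU _; apply: lee_wpmul2l; first by rewrite lee_fin.
  by apply: le_measure; rewrite ?inE.
Qed.

Lemma shrinkable_components (E O : set R) (oO : open O) (a b k1 k2 : R) :
  0 <= k1 -> 0 <= k2 -> O `<=` `]a, b[ ->
  (forall c d, maximal_itv O c d -> shrinkable E k1 k2 `]c, d[) ->
  shrinkable E k1 k2 O.
Proof.
move=> k10 k20 Oab shrink_itv; set I := open_disjoint_itv oO.
have /choice[T HT] : forall k, exists T, [/\ open T, T `<=` I k, E `&` I k `<=` T &
    (k1%:E * mu T <= k2%:E * mu (I k))%E].
  move=> k; have [c [d [Ik mx]]] := open_disjoint_itvE oO k Oab; rewrite -/I in Ik.
  rewrite Ik; have [cd|dc] := ltP c d; first by have [? _ _] := mx cd; exact: shrink_itv.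
  have -> : `]c, d[%classic = set0 :> set R by rewrite set_itv_ge //= bnd_simp -leNgt.
  exists set0; split; [exact: open0 | by [] | by move=> ? [] | by rewrite !measure0 !mule0].
have mT k : measurable (T k) by apply: measurable_realfun.open_measurable; case: (HT k).
have mI k : measurable (I k).
  by apply: measurable_realfun.open_measurable; exact: open_disjoint_itv_open.
exists (\bigcup_k T k); split.
- by apply: bigcup_open => k _; case: (HT k).
- by move=> x [k _ Tx]; case: (HT k) => _ /(_ x Tx) /open_disjoint_itv_sub.
- move=> x [Ex]; rewrite {1}(open_disjoint_itv_bigcup oO) => -[k _ Ix].
  by exists k => //; case: (HT k) => _ _ ET _; exact: ET.
- apply: (@le_trans _ _ (k1%:E * \sum_(0 <= k <oo) mu (T k))%E).
    apply: lee_wpmul2l; first by rewrite lee_fin.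
    by apply: measure_sigma_subadditive => //; exact: bigcupT_measurable.
  rewrite {1}(open_disjoint_itv_bigcup oO) measure_bigcup_nat //; last first.
    exact: open_disjoint_itv_trivIset.
  rewrite -!nneseriesZl => [||k _]; last exact: measure_ge0.
  + apply: lee_nneseries => [k _ _|k _]; last by case: (HT k).
    by rewrite mule_ge0 // lee_fin.
  + by move=> k _; exact: measure_ge0.
Qed.

Lemma negligible_of_shrinkable (E : set R) (p q : R) : 0 <= p < q ->
  (forall a b O, open O -> O `<=` `]a, b[ -> shrinkable E q p O) ->
  mu.-negligible E.
Proof.
move=> pq shrink; have [p0 pq'] := andP pq.
apply: negligible_itvoo_nat => n; set O0 : set R := `](- n%:R), n%:R[%classic.
have n0 : - n%:R <= n%:R :> R by rewrite (@le_trans _ _ 0) // ?oppr_le0 ?ler0n.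
have /choice[F HF] : forall O, exists U, open O -> O `<=` O0 ->
    [/\ open U, U `<=` O, E `&` O `<=` U & (q%:E * mu U <= p%:E * mu O)%E].
  move=> O; have [oO|] := pselect (open O); last by exists set0.
  have [sO|] := pselect (O `<=` O0); last by exists set0.
  by have [U HU] := shrink _ _ O oO sO; exists U.
pose Ok k := iter k F O0.
have HOk k : [/\ open (Ok k), Ok k `<=` O0, E `&` O0 `<=` Ok k &
    ((q ^+ k)%:E * mu (Ok k) <= (p ^+ k * (n%:R - - n%:R))%:E)%E].
  elim: k => [|k [ok sk ek mk]].
    split; [exact: itv_open | by [] | by move=> ? [] |].
    by rewrite expr0 mul1e mul1r lebesgue_measure_itvoo.
  have [oF sF eF mF] := HF (Ok k) ok sk.
  split => //; first exact: subset_trans sk.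
    by move=> x [Ex Ox]; apply: eF; split => //; exact: ek.
  rewrite exprS EFinM [(q%:E * _)%E]muleC -muleA.
  have qk0 : (0 <= (q ^+ k)%:E)%E by rewrite lee_fin exprn_ge0 // (le_trans p0) // ltW.
  apply: le_trans (lee_wpmul2l qk0 mF) _.
  by rewrite muleCA exprS -mulrA EFinM lee_wpmul2l ?lee_fin.
apply: (negligible_geometric (C := n%:R - - n%:R) pq) => k; exists (Ok k).
have [ok _ ek mk] := HOk k; split => //; exact: measurable_realfun.open_measurable.
Qed.

End negligible_sets.

Section arbitrarily_small.
Context {R : realType}.
Implicit Types (P Q : R -> Prop).

Definition arbitrarily_small P := forall e, 0 < e -> exists2 h, 0 < h < e & P h.

Lemma not_arbitrarily_small P : ~ arbitrarily_small P ->
  exists2 e, 0 < e & forall h, 0 < h < e -> ~ P h.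
Proof.
move=> NP; apply: contrapT => N; apply: NP => e e0; apply: contrapT => Ne.
by apply: N; exists e => // h he Ph; apply: Ne; exists h.
Qed.

Lemma arbitrarily_small_near P e1 : 0 < e1 ->
  (forall h, 0 < h < e1 -> P h) -> arbitrarily_small P.
Proof.
move=> e10 eP e e0; have m0 : 0 < Num.min e e1 by rewrite lt_min e0 e10.
have [h /andP[h0]] := itvoo_near_left m0 ltr01; rewrite lt_min => /andP[he he1] _.
by exists h; rewrite ?h0 ?he //; apply: eP; rewrite h0 he1.
Qed.

Lemma arbitrarily_smallW P Q : (forall h, 0 < h -> P h -> Q h) ->
  arbitrarily_small P -> arbitrarily_small Q.
Proof.
move=> PQ sP e e0; have [h /andP[h0 he] Ph] := sP e e0.
by exists h; [rewrite h0 he | exact: PQ].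
Qed.

Lemma arbitrarily_small_or P Q : arbitrarily_small (fun h => P h \/ Q h) ->
  arbitrarily_small P \/ arbitrarily_small Q.
Proof.
move=> sPQ; have [|/not_arbitrarily_small[e1 e10 nP]] := pselect (arbitrarily_small P).
  by left.
right => e e0; have m0 : 0 < Num.min e e1 by rewrite lt_min e0 e10.
have [h /andP[h0]] := sPQ _ m0.
rewrite lt_min => /andP[he he1] [Ph|Qh]; last by exists h; rewrite ?h0.
by have := nP h; rewrite h0 he1 => /(_ isT).
Qed.

Lemma arbitrarily_small_gt_le (g : R -> R) (M M' : R) : M <= M' ->
  arbitrarily_small (fun h => M' * h < g h) -> arbitrarily_small (fun h => M * h < g h).
Proof.
by move=> MM'; apply: arbitrarily_smallW => h h0; apply: le_lt_trans; rewrite ler_pM2r.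
Qed.

Lemma arbitrarily_small_gt_of_not_lt (g : R -> R) (r1 r2 : R) : r1 < r2 ->
  ~ arbitrarily_small (fun h => g h < r2 * h) -> arbitrarily_small (fun h => r1 * h < g h).
Proof.
move=> r12 /not_arbitrarily_small[e1 e10 nlt].
apply: (arbitrarily_small_near e10) => h /[dup] /andP[h0 _] /nlt /negP.
by rewrite -leNgt; apply: lt_le_trans; rewrite ltr_pM2r.
Qed.

End arbitrarily_small.

Section dini_quotients.
Context {R : realType}.
Local Notation mu := (@lebesgue_measure R).
Implicit Types (f : R -> R).

Definition right_quot_gt f x q := arbitrarily_small (fun h => q * h < f (x + h) - f x).
Definition right_quot_lt f x p := arbitrarily_small (fun h => f (x + h) - f x < p * h).
Definition left_quot_gt f x q := arbitrarily_small (fun h => q * h < f x - f (x - h)).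
Definition left_quot_lt f x p := arbitrarily_small (fun h => f x - f (x - h) < p * h).

Definition mirror f : R -> R := fun t => - f (- t).

Lemma mirror_homo f : {homo f : x y / x <= y} -> {homo mirror f : x y / x <= y}.
Proof. by move=> ndf x y xy; rewrite /mirror lerN2 ndf // lerN2. Qed.

Lemma mirror_continuous f : continuous f -> continuous (mirror f).
Proof.
move=> cf x; apply: continuousN; apply: continuous_comp; first exact: oppr_continuous.
exact: cf.
Qed.

Lemma right_quot_lt_mirror f x p :
  right_quot_lt f x p -> left_quot_lt (mirror f) (- x) p.
Proof.
by apply: arbitrarily_smallW => h _; rewrite /mirror /= !opprK opprD !opprK addrC.
Qed.

Lemma left_quot_gt_mirror f x q :
  left_quot_gt f x q -> right_quot_gt (mirror f) (- x) q.
Proof.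
by apply: arbitrarily_smallW => h _; rewrite /mirror /= opprD !opprK addrC.
Qed.

Lemma continuous_subr_scale f (q : R) : continuous f -> continuous (fun t => f t - q * t).
Proof.
move=> cf x; apply: continuousB; first exact: cf.
by apply: continuousM; [exact: cst_continuous | exact: cvg_id].
Qed.

Lemma shadow_right_of_quot f (c d x q : R) : c < x < d ->
  right_quot_gt f x q -> shadow_right (fun t => f t - q * t) c d x.
Proof.
move=> /andP[cx xd] /(_ (d - x)); rewrite subr_gt0 => /(_ xd)[h /andP[h0 hd] qh].
by split; [rewrite cx xd | exists (x + h); [apply/andP; split | ]; lra].
Qed.

Lemma shadow_left_of_quot f (c d x p : R) : c < x < d ->
  left_quot_lt f x p -> shadow_left (fun t => f t - p * t) c d x.
Proof.
move=> /andP[cx xd] /(_ (x - c)); rewrite subr_gt0 => /(_ cx)[h /andP[h0 hc] ph].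
by split; [rewrite cx xd | exists (x - h); [apply/andP; split | ]; lra].
Qed.

Lemma shadow_right_growth f (al be c d q : R) : continuous f ->
  maximal_itv (shadow_right (fun t => f t - q * t) al be) c d ->
  q * (d - c) <= f d - f c.
Proof. by move=> cf /(shadow_right_le (continuous_subr_scale (q:=q) cf)); lra. Qed.

Lemma shadow_left_growth f (al be c d p : R) : continuous f ->
  maximal_itv (shadow_left (fun t => f t - p * t) al be) c d ->
  f d - f c <= p * (d - c).
Proof. by move=> cf /(shadow_left_le (continuous_subr_scale (q:=p) cf)); lra. Qed.

Variables (f : R -> R) (ndf : {homo f : x y / x <= y}) (cf : continuous f).

(* On a component of the left shadow of f - p t the increment of f is at most p times
   its length, and inside it, on a component of the right shadow of f - q t, at least
   q times its length. *)
Lemma shrinkable_left_lt_right_gt (c d p q : R) : c < d -> 0 <= p -> 0 <= q ->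
  shrinkable [set x | left_quot_lt f x p /\ right_quot_gt f x q] q p `]c, d[.
Proof.
move=> cd p0 q0; set E := [set x | _ /\ _].
set S := shadow_left (fun t => f t - p * t) c d.
have oS : open S by exact/open_shadow_left/continuous_subr_scale.
have Scd : S `<=` `]c, d[ by move=> x [xcd _]; rewrite /= in_itv.
apply: (@shrinkable_sub _ _ _ S) => //; first exact: measurable_realfun.open_measurable.
  by move=> x [[Lx _] /=]; rewrite in_itv => /shadow_left_of_quot; apply.
apply: (shrinkable_components oS q0 p0 Scd) => c' d' mx.
have [cd' _ _ _] := mx.
set T := shadow_right (fun t => f t - q * t) c' d'.
have oT : open T by exact/open_shadow_right/continuous_subr_scale.
have Tcd : T `<=` `]c', d'[ by move=> x [xcd _]; rewrite /= in_itv.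
exists T; split => //.
  by move=> x [[_ Rx] /=]; rewrite in_itv => /shadow_right_of_quot; apply.
apply: le_trans (component_growth_measure_le oT ndf (ltW cd') q0 Tcd _) _.
  by move=> ? ? /shadow_right_growth; apply.
by rewrite (lebesgue_measure_itvoo (ltW cd')) -EFinM lee_fin; exact: shadow_left_growth mx.
Qed.

Lemma negligible_left_lt_right_gt (p q : R) : 0 <= p < q ->
  mu.-negligible [set x | left_quot_lt f x p /\ right_quot_gt f x q].
Proof.
move=> /[dup] pq /andP[p0 /(le_lt_trans p0) /ltW q0].
apply: (negligible_of_shrinkable pq) => a b O oO Oab.
apply: (shrinkable_components oO q0 p0 Oab) => c d [cd _ _ _].
exact: shrinkable_left_lt_right_gt.
Qed.

Lemma negligible_right_gt_oo :
  mu.-negligible [set x | forall M, 0 < M -> right_quot_gt f x M].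
Proof.
apply: negligible_itvoo_nat => n.
have n0 : - n%:R <= n%:R :> R by rewrite (@le_trans _ _ 0) // ?oppr_le0 ?ler0n.
apply: (negligible_geometric (p := 1) (q := 2) (C := f n%:R - f (- n%:R))).
  by rewrite ler01 ltr1n.
move=> k; have M0 : 0 < 2 ^+ k :> R by rewrite exprn_gt0.
set T := shadow_right (fun t => f t - 2 ^+ k * t) (- n%:R) n%:R.
have oT : open T by exact/open_shadow_right/continuous_subr_scale.
exists T; split; first exact: measurable_realfun.open_measurable.
  by move=> x [Mx /=]; rewrite in_itv => /shadow_right_of_quot; apply; exact: Mx.
rewrite expr1n mul1r; apply: (component_growth_measure_le oT ndf n0); rewrite ?ltW //.
  by move=> x [xn _]; rewrite /= in_itv.
by move=> ? ? /shadow_right_growth; apply.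
Qed.

End dini_quotients.

Section dini_mirror.
Context {R : realType}.
Local Notation mu := (@lebesgue_measure R).
Variables (f : R -> R) (ndf : {homo f : x y / x <= y}) (cf : continuous f).

Lemma negligible_right_lt_left_gt (p q : R) : 0 <= p < q ->
  mu.-negligible [set x | right_quot_lt f x p /\ left_quot_gt f x q].
Proof.
move=> pq; have := negligible_left_lt_right_gt (mirror_homo ndf) (mirror_continuous cf) pq.
move=> /negligible_oppr; apply: negligibleS => x [Rx Lx] /=.
by split; [exact: right_quot_lt_mirror | exact: left_quot_gt_mirror].
Qed.

Lemma negligible_left_gt_oo :
  mu.-negligible [set x | forall M, 0 < M -> left_quot_gt f x M].
Proof.
have := negligible_right_gt_oo (mirror_homo ndf) (mirror_continuous cf).
move=> /negligible_oppr; apply: negligibleS => x Lx M M0 /=.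
exact: left_quot_gt_mirror (Lx M M0).
Qed.

End dini_mirror.

Section difference_quotient.
Context {R : realType}.
Variables (f : R -> R) (x : R).

Definition diff_quot (h : R) := h^-1 * (f (x + h) - f x).
Local Notation F := (fun h => (diff_quot h)%:E).

Lemma diff_quotN h : diff_quot (- h) = h^-1 * (f x - f (x - h)).
Proof. by rewrite /diff_quot invrN mulNr -mulrN opprB. Qed.

Lemma diff_quot_ge0 h : {homo f : u v / u <= v} -> 0 <= diff_quot h.
Proof.
move=> ndf; have [h0|h0|->] := ltgtP h 0; last by rewrite /diff_quot invr0 mul0r.
- rewrite -{1}[h]opprK diff_quotN; apply: mulr_ge0; first by rewrite invr_ge0 oppr_ge0 ltW.
  by rewrite subr_ge0 ndf // lerBlDr lerDl oppr_ge0 ltW.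
- apply: mulr_ge0; first by rewrite invr_ge0 ltW.
  by rewrite subr_ge0 ndf // lerDl ltW.
Qed.

Lemma derivable_of_lime (l : R) :
  lime_sup F 0 = l%:E -> lime_inf F 0 = l%:E -> derivable f x 1.
Proof.
move=> Ls Li; apply: (cvgP l).
have -> : (fun h : R => h^-1 *: ((f \o shift x) (h *: 1) - f x)) = diff_quot.
  by apply/funext => h; rewrite /diff_quot /= [h%:A]mulr1 [h + x]addrC.
have /fine_cvgP[_ hr] := lime_sup_inf_at_right Ls Li.
have /fine_cvgP[_ hl] := lime_sup_inf_at_left Ls Li.
exact: (@cvg_at_right_left_dnbhs R R^o diff_quot 0 l hr hl).
Qed.

Lemma lime_sup_gt_sides q : (q%:E < lime_sup F 0)%E ->
  right_quot_gt f x q \/ left_quot_gt f x q.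
Proof.
rewrite lime_supE => qL; apply: arbitrarily_small_or => e e0.
have : (q%:E < ereal_sup [set F h | h in ball 0%R e `\ 0%R])%E.
  apply: lt_le_trans qL _; apply: ereal_inf_lbound; exists e => //.
  by rewrite /= in_itv /= e0.
move=> /ereal_sup_gt [_ [h [bh nh] <-]]; rewrite lte_fin => qh.
have {bh} he : `|h| < e by move: bh; rewrite /ball /= sub0r normrN.
have [h0|h0|h0] := ltgtP h 0; last by exfalso; apply: nh; rewrite h0.
- exists (- h); first by rewrite oppr_gt0 h0 /= -(ltr0_norm h0).
  by right; move: qh; rewrite -{1}[h]opprK diff_quotN ltr_pdivlMl ?oppr_gt0 // mulrC.
- exists h; first by rewrite h0 /= -(gtr0_norm h0).
  by left; move: qh; rewrite ltr_pdivlMl // mulrC.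
Qed.

Lemma lime_inf_lt_sides p : (lime_inf F 0 < p%:E)%E ->
  right_quot_lt f x p \/ left_quot_lt f x p.
Proof.
rewrite lime_infE => pL; apply: arbitrarily_small_or => e e0.
have : (ereal_inf [set F h | h in ball 0%R e `\ 0%R] < p%:E)%E.
  apply: le_lt_trans pL; apply: ereal_sup_ubound; exists e.
    by rewrite /= in_itv /= e0.
  by rewrite /ereal_inf image_comp.
move=> /ereal_inf_lt [_ [h [bh nh] <-]]; rewrite lte_fin => ph.
have {bh} he : `|h| < e by move: bh; rewrite /ball /= sub0r normrN.
have [h0|h0|h0] := ltgtP h 0; last by exfalso; apply: nh; rewrite h0.
- exists (- h); first by rewrite oppr_gt0 h0 /= -(ltr0_norm h0).
  by right; move: ph; rewrite -{1}[h]opprK diff_quotN ltr_pdivrMl ?oppr_gt0 // mulrC.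
- exists h; first by rewrite h0 /= -(gtr0_norm h0).
  by left; move: ph; rewrite ltr_pdivrMl // mulrC.
Qed.

End difference_quotient.

Section lebesgue_nondecreasing.
Context {R : realType}.
Local Notation mu := (@lebesgue_measure R).

Variables (f : R -> R) (ndf : {homo f : x y / x <= y}).

Definition dini_gap_lr (p q : rat) x :=
  0 <= (ratr p : R) < ratr q /\ left_quot_lt f x (ratr p) /\ right_quot_gt f x (ratr q).
Definition dini_gap_rl (p q : rat) x :=
  0 <= (ratr p : R) < ratr q /\ right_quot_lt f x (ratr p) /\ left_quot_gt f x (ratr q).

Variable x : R.
Local Notation F := (fun h => (diff_quot f x h)%:E).

Lemma dini_gap_of_lime (l L : R) : 0 <= l < L ->
  lime_inf F 0 = l%:E -> lime_sup F 0 = L%:E ->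
  (exists p q, dini_gap_lr p q x) \/ (exists p q, dini_gap_rl p q x).
Proof.
move=> /andP[l0 lL] El EL.
have [p] := rat_in_itvoo lL; rewrite in_itv /= => /andP[lp pL].
have [r1] := rat_in_itvoo pL; rewrite in_itv /= => /andP[pr1 r1L].
have [r2] := rat_in_itvoo r1L; rewrite in_itv /= => /andP[r12 r2L].
have [q] := rat_in_itvoo r2L; rewrite in_itv /= => /andP[r2q qL].
have p0 : 0 <= ratr p :> R by rewrite (le_trans l0) ?ltW.
have r20 : 0 <= ratr r2 :> R by rewrite (le_trans p0) // ltW // (lt_trans pr1).
have pq : ratr p < ratr q :> R by rewrite (lt_trans pr1) // (lt_trans r12).
have [Rq|Lq] : right_quot_gt f x (ratr q) \/ left_quot_gt f x (ratr q).
  by apply: lime_sup_gt_sides; rewrite EL lte_fin.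
all: have [Rp|Lp] : right_quot_lt f x (ratr p) \/ left_quot_lt f x (ratr p)
  by apply: lime_inf_lt_sides; rewrite El lte_fin.
- have [Lr2|/(arbitrarily_small_gt_of_not_lt r12) Lr1] := pselect (left_quot_lt f x (ratr r2)).
    by left; exists r2, q; rewrite /dini_gap_lr r20 r2q.
  by right; exists p, r1; rewrite /dini_gap_rl p0 pr1.
- by left; exists p, q; rewrite /dini_gap_lr p0 pq.
- by right; exists p, q; rewrite /dini_gap_rl p0 pq.
- have [Rr2|/(arbitrarily_small_gt_of_not_lt r12) Rr1] := pselect (right_quot_lt f x (ratr r2)).
    by right; exists r2, q; rewrite /dini_gap_rl r20 r2q.
  by left; exists p, r1; rewrite /dini_gap_lr p0 pr1.
Qed.

Lemma dini_gap_oo : lime_sup F 0 = +oo%E ->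
  (forall M, 0 < M -> right_quot_gt f x M) \/ (forall M, 0 < M -> left_quot_gt f x M).
Proof.
move=> EL; have sides M : right_quot_gt f x M \/ left_quot_gt f x M.
  by apply: lime_sup_gt_sides; rewrite EL ltry.
have [|/existsNP[M0 /not_implyP[_ nR]]] := pselect (forall M, 0 < M -> right_quot_gt f x M).
  by left.
right => M _; have [RM|LM] := sides (Num.max M M0).
  by exfalso; apply: nR; apply: arbitrarily_small_gt_le RM; rewrite le_max lexx orbT.
by apply: arbitrarily_small_gt_le LM; rewrite le_max lexx.
Qed.

Lemma not_derivable_dini : ~ derivable f x 1 ->
  (exists p q, dini_gap_lr p q x) \/ (exists p q, dini_gap_rl p q x) \/
  (forall M, 0 < M -> right_quot_gt f x M) \/ (forall M, 0 < M -> left_quot_gt f x M).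
Proof.
move=> nd; have Li0 : (0 <= lime_inf F 0)%E.
  by apply: lime_inf_ge0 => h; rewrite lee_fin diff_quot_ge0.
have LiLs := lime_inf_sup F 0.
case EL: (lime_sup F 0) => [L| |]; last first.
- by move: LiLs; rewrite EL leeNy_eq => /eqP El; move: Li0; rewrite El.
- by right; right; exact: dini_gap_oo.
case El: (lime_inf F 0) => [l| |]; last by move: Li0; rewrite El.
  have l0 : 0 <= l by rewrite -lee_fin -El.
  move: LiLs; rewrite El EL lee_fin le_eqVlt => /predU1P[lL|lL].
    by exfalso; apply: nd; apply: (@derivable_of_lime _ f x L); rewrite // El lL.
  have l0L : 0 <= l < L by rewrite l0 lL.
  by have [|] := dini_gap_of_lime l0L El EL; [left | right; left].
by move: LiLs; rewrite El EL.
Qed.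

End lebesgue_nondecreasing.

Theorem negligible_not_derivable_nondecreasing {R : realType} (f : R -> R) :
  {homo f : x y / x <= y} -> continuous f ->
  (@lebesgue_measure R).-negligible [set x | ~ derivable f x 1].
Proof.
move=> ndf cf.
apply: (@negligibleS _ _ _ (@lebesgue_measure R) ((\bigcup_(pq : rat * rat) dini_gap_lr f pq.1 pq.2) `|`
  (\bigcup_(pq : rat * rat) dini_gap_rl f pq.1 pq.2) `|`
  ([set x | forall M, 0 < M -> right_quot_gt f x M] `|`
   [set x | forall M, 0 < M -> left_quot_gt f x M]))).
  move=> y /(not_derivable_dini ndf)[[p [q ?]]|[[p [q ?]]|[?|?]]].
  - by left; left; exists (p, q).
  - by left; right; exists (p, q).
  - by right; left.
  - by right; right.
apply: negligibleU; first apply: negligibleU.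
- apply: negligible_bigcup_countable => -[p q] /=.
  have [pq|] := pselect (0 <= (ratr p : R) < ratr q); last first.
    by move=> npq; apply: (negligibleS _ (negligible_set0 _)) => y [].
  by apply: (negligibleS _ (negligible_left_lt_right_gt ndf cf pq)) => y [_].
- apply: negligible_bigcup_countable => -[p q] /=.
  have [pq|] := pselect (0 <= (ratr p : R) < ratr q); last first.
    by move=> npq; apply: (negligibleS _ (negligible_set0 _)) => y [].
  by apply: (negligibleS _ (negligible_right_lt_left_gt ndf cf pq)) => y [_].
- apply: negligibleU; [exact: negligible_right_gt_oo | exact: negligible_left_gt_oo].
Qed.

Section local_monotone.
Context {R : realType}.
Local Notation mu := (@lebesgue_measure R).

Definition clamp (r s t : R) := Num.min (Num.max t r) s.

Lemma clamp_in (r s t : R) : r <= s -> clamp r s t \in `[r, s].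
Proof. by move=> rs; rewrite in_itv /= /clamp le_min le_max lexx orbT rs ge_min lexx orbT. Qed.

Lemma clamp_id (r s t : R) : t \in `[r, s] -> clamp r s t = t.
Proof. by rewrite in_itv /= => /andP[rt ts]; rewrite /clamp (max_idPl rt) (min_idPl ts). Qed.

Lemma clamp_homo (r s : R) : {homo clamp r s : x y / x <= y}.
Proof. by move=> x y xy; rewrite /clamp le_min2 // le_max2. Qed.

Lemma continuous_clamp (r s : R) : continuous (clamp r s).
Proof.
have -> : clamp r s = ((fun t => t) \max (fun=> r)) \min (fun=> s) by [].
apply: min_fun_continuous; last exact: cst_continuous.
apply: max_fun_continuous; last exact: cst_continuous.
by move=> x; exact: cvg_id.
Qed.

Lemma negligible_not_derivable_itv (phi : R -> R) (r s : R) : r < s ->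
  {in `[r, s], continuous phi} -> {in `[r, s] &, {homo phi : x y / x <= y}} ->
  mu.-negligible [set x | r < x < s /\ ~ derivable phi x 1].
Proof.
move=> rs cphi ndphi; pose g := phi \o clamp r s.
have cl t := clamp_in t (ltW rs).
have cg : continuous g.
  by move=> x; apply: continuous_comp; [exact: continuous_clamp | exact: cphi].
have ndg : {homo g : x y / x <= y} by move=> u v uv; apply: ndphi; rewrite ?clamp_homo.
have g_phi x : r < x < s -> \forall y \near x, g y = phi y.
  move=> xrs; have : nbhs x `]r, s[%classic.
    by apply: open_nbhs_nbhs; split; [exact: itv_open | rewrite /= in_itv].
  apply: filterS => y; rewrite /= in_itv => /andP[ry ys].
  by rewrite /g /= clamp_id // in_itv /= !ltW.
apply: (negligibleS _ (negligible_not_derivable_nondecreasing ndg cg)).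
by move=> x [xrs nd] dg; apply: nd; exact: near_eq_derivable (g_phi x xrs) dg.
Qed.

Lemma negligible_not_derivable_itv_monotone (phi : R -> R) (r s : R) : r < s ->
  {in `[r, s], continuous phi} ->
  {in `[r, s] &, {homo phi : x y / x <= y}} \/
  {in `[r, s] &, {homo phi : x y / x <= y >-> y <= x}} ->
  mu.-negligible [set x | r < x < s /\ ~ derivable phi x 1].
Proof.
move=> rs cphi [inc|dec]; first exact: negligible_not_derivable_itv.
apply: (negligibleS _ (negligible_not_derivable_itv (phi := \- phi) rs _ _)).
- move=> x [xrs nd]; split => // /derivableN; apply: contra_not nd.
  by have -> : - (\- phi) = phi by apply/funext => t; rewrite /= opprK.
- by move=> x xI; apply: continuousN; exact: cphi.
- by move=> u v uI vI uv; rewrite lerN2; exact: dec.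
Qed.

End local_monotone.

Lemma visc_subdiff0_min {R : realType} (a b : R) (phi : R -> R) (V : set R) (m : R) :
  open V -> V m -> V `<=` `]a, b[ -> (forall z, V z -> phi m <= phi z) ->
  visc_subdiff a b phi m 0.
Proof.
move=> oV Vm Vab mmin; split; first exact: Vab.
exists V, (fun=> phi m); split; split => //.
- split => z Vz; first exact: derivable_cst.
  have -> : derive1 (fun=> phi m) = (fun=> 0 : R).
    by apply/funext => t; exact: derive1_cst.
  exact: cst_continuous.
- exact: derive1_cst.
Qed.

Section off_critical_closure.
Context {R : realType}.
Local Notation mu := (@lebesgue_measure R).
Variables (a b : R) (phi : R -> R).
Hypothesis cphi : {in `]a, b[, continuous phi}.

Let U := `]a, b[ `&` ~` closure [set y | visc_subdiff a b phi y 0].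

Let open_U : open U.
Proof. by apply: openI; [exact: itv_open | exact/closed_openC/closed_closure]. Qed.

Lemma no_interior_min (y z w : R) : y < z < w -> `[y, w] `<=` U ->
  phi y <= phi z \/ phi w <= phi z.
Proof.
move=> /andP[yz zw] ywU; have yw := ltW (lt_trans yz zw).
have cw : {within `[y, w], continuous phi}.
  apply: continuous_in_subspaceT => t /set_mem /ywU [+ _].
  by rewrite /= in_itv /= => tab; apply: cphi; rewrite in_itv.
have [m mI mmin] := EVT_min yw cw.
have mz : phi m <= phi z by apply: mmin; rewrite in_itv /= !ltW.
move: mI; rewrite in_itv /= => /andP[].
rewrite le_eqVlt => /predU1P[ym _|ym]; first by left; rewrite ym.
rewrite le_eqVlt => /predU1P[mw|mw]; first by right; rewrite -mw.
have [_ nZm] : U m by apply: ywU; rewrite /= in_itv /= !ltW.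
exfalso; apply: nZm; apply: subset_closure.
apply: (@visc_subdiff0_min _ _ _ _ `]y, w[%classic); [exact: itv_open | by rewrite /= in_itv /= ym mw | |].
  move=> t; rewrite /= in_itv /= => /andP[yt tw].
  by have [] := ywU t; rewrite /= in_itv /= ?ltW.
by move=> t; rewrite /= in_itv /= => /andP[yt tw]; apply: mmin; rewrite in_itv /= !ltW.
Qed.

Definition monotone_on_rat (r s : rat) :=
  [/\ (ratr r : R) < ratr s, `[ratr r, ratr s]%classic `<=` U &
      {in `[ratr r, ratr s] &, {homo phi : u v / u <= v}} \/
      {in `[ratr r, ratr s] &, {homo phi : u v / u <= v >-> v <= u}}].

Definition monotone_near (x : R) :=
  exists r s : rat, ratr r < x < ratr s /\ monotone_on_rat r s.

Lemma not_monotone_near_pairs (x d : R) : 0 < d ->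
  (forall t, x - d < t < x + d -> U t) -> ~ monotone_near x ->
  (exists u v, [/\ x - d < u, u < v, v < x + d & phi v < phi u]) /\
  (exists u v, [/\ x - d < u, u < v, v < x + d & phi u < phi v]).
Proof.
move=> d0 dU nmon.
have [r] := @rat_in_itvoo R (x - d) x ltac:(lra); rewrite in_itv /= => /andP[dr rx].
have [s] := @rat_in_itvoo R x (x + d) ltac:(lra); rewrite in_itv /= => /andP[xs sd].
have rsU : `[ratr r, ratr s]%classic `<=` U.
  by move=> t; rewrite /= in_itv /= => /andP[rt ts]; apply: dU; apply/andP; split; lra.
have in_rs t : t \in `[ratr r, ratr s] -> x - d < t < x + d.
  by rewrite in_itv /= => /andP[rt ts]; apply/andP; split; lra.
have rxs : ratr r < x < ratr s by rewrite rx xs.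
have rs : ratr r < ratr s :> R by exact: lt_trans xs.
split; apply: contrapT => N; apply: nmon; exists r, s; split => //; split => //; [left | right].
- move=> u v /in_rs /andP[du _] /in_rs /andP[_ vd] uv; rewrite leNgt; apply/negP => vu.
  apply: N; exists u, v; split => //; rewrite lt_neqAle uv andbT.
  by apply: contraTneq vu => ->; rewrite ltxx.
- move=> u v /in_rs /andP[du _] /in_rs /andP[_ vd] uv; rewrite leNgt; apply/negP => uv'.
  apply: N; exists u, v; split => //; rewrite lt_neqAle uv andbT.
  by apply: contraTneq uv' => ->; rewrite ltxx.
Qed.

(* phi decreases somewhere near x1 and increases somewhere near x2, which would give
   phi an interior minimum on a segment of U. *)
Lemma not_monotone_near_separated (x1 x2 : R) : x1 < x2 -> `[x1, x2] `<=` U ->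
  ~ monotone_near x1 -> ~ monotone_near x2 -> False.
Proof.
move=> x12 sU nM1 nM2.
have /nbhs_ballP[d1 /= d10 B1] : nbhs x1 U.
  by apply: open_nbhs_nbhs; split => //; apply: sU; rewrite /= in_itv /= lexx ltW.
have /nbhs_ballP[d2 /= d20 B2] : nbhs x2 U.
  by apply: open_nbhs_nbhs; split => //; apply: sU; rewrite /= in_itv /= lexx ltW.
set d := Num.min (Num.min d1 d2) ((x2 - x1) / 2).
have d0 : 0 < d by rewrite !lt_min d10 d20 divr_gt0 // subr_gt0.
have [dd1 dd2 dx] : [/\ d <= d1, d <= d2 & d <= (x2 - x1) / 2].
  by rewrite !ge_min !lexx !orbT.
have B1' t : x1 - d < t < x1 + d -> U t.
  by move=> /andP[? ?]; apply: B1; rewrite /ball /= ltr_distlC; apply/andP; split; lra.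
have B2' t : x2 - d < t < x2 + d -> U t.
  by move=> /andP[? ?]; apply: B2; rewrite /ball /= ltr_distlC; apply/andP; split; lra.
have [[u [v [du uv vd vu]]] _] := not_monotone_near_pairs d0 B1' nM1.
have [_ [u' [v' [du' uv' vd' uv'_lt]]]] := not_monotone_near_pairs d0 B2' nM2.
have sUw : `[u, v']%classic `<=` U.
  move=> t; rewrite /= in_itv /= => /andP[ut tv].
  have [tx1|tx1] := leP t x1; first by apply: B1'; apply/andP; split; lra.
  have [tx2|tx2] := leP t x2; first by apply: sU; rewrite /= in_itv /= ltW.
  by apply: B2'; apply/andP; split; lra.
have vu' : v < u' by lra.
have uvv' : u < v < v' by rewrite uv (lt_trans vu').
have [|v'v] := no_interior_min uvv' sUw; first by rewrite leNgt vu.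
have sUw' : `[v, v']%classic `<=` U.
  by move=> t; rewrite /= in_itv /= => /andP[? ?]; apply: sUw; rewrite /= in_itv /=; apply/andP; split; lra.
have vu'v' : v < u' < v' by rewrite vu' uv'.
have [vu'_le|] := no_interior_min vu'v' sUw'.
  by move: (lt_le_trans uv'_lt v'v); rewrite ltNge vu'_le.
by rewrite leNgt uv'_lt.
Qed.

Lemma countable_not_monotone_near :
  countable [set x | U x /\ ~ monotone_near x].
Proof.
apply/countable_injP; set I := open_disjoint_itv open_U.
have /choice[idx idxP] : forall x, exists k, U x -> I k x.
  move=> x; have [Ux|] := pselect (U x); last by exists 0%N.
  by move: Ux; rewrite {1}(open_disjoint_itv_bigcup open_U) => -[k _ Ik]; exists k.
exists idx => x1 x2; rewrite !inE => -[U1 nM1] [U2 nM2] idx12.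
have I1 := idxP x1 U1; have I2 := idxP x2 U2; rewrite idx12 in I1.
have IU y z : I (idx x2) y -> I (idx x2) z -> `[y, z]%classic `<=` U.
  move=> Iy Iz t; rewrite /= in_itv /= => yzt; apply: (open_disjoint_itv_sub (oO := open_U)).
  exact: (open_disjoint_itv_is_interval Iy Iz yzt).
case: (ltgtP x1 x2) => // x12; exfalso.
- exact: (not_monotone_near_separated x12 (IU _ _ I1 I2) nM1 nM2).
- exact: (not_monotone_near_separated x12 (IU _ _ I2 I1) nM2 nM1).
Qed.

Lemma negligible_not_derivable_off_closure :
  mu.-negligible [set x | U x /\ ~ derivable phi x 1].
Proof.
apply: (@negligibleS _ _ _ mu ((\bigcup_(rs : rat * rat) [set x | monotone_on_rat rs.1 rs.2 /\
  ratr rs.1 < x < ratr rs.2 /\ ~ derivable phi x 1]) `|` [set x | U x /\ ~ monotone_near x])).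
  move=> x [Ux nd]; have [[r [s [xrs mon]]]|nM] := pselect (monotone_near x); last by right.
  by left; exists (r, s).
apply: negligibleU.
- apply: negligible_bigcup_countable => -[r s] /=.
  have [[rs rsU mono]|nmon] := pselect (monotone_on_rat r s); last first.
    by apply: (negligibleS _ (negligible_set0 _)) => x [/nmon].
  apply: (negligibleS _ (negligible_not_derivable_itv_monotone rs _ mono)).
    by move=> x [_ []].
  by move=> t /rsU [+ _]; exact: cphi.
- have cN := countable_not_monotone_near.
  exists [set x | U x /\ ~ monotone_near x]; split => //.
  + by apply: countable_measurable => // t; exact: measurable_set1.
  + exact: countable_lebesgue_measure0.
Qed.

End off_critical_closure.

Lemma closure_cvg_seq {R : realType} (A : set R) (x : R) : closure A x ->
  exists2 xs : nat -> R, xs @ \oo --> x & forall k, A (xs k).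
Proof.
move=> clx; have /choice[xs xsP] : forall n : nat, exists z, A z /\ `|x - z| < n.+1%:R^-1.
  move=> n; have e0 : (0 : R) < n.+1%:R^-1 by rewrite invr_gt0.
  by have [z [Az xz]] := clx _ (nbhsx_ballx x _ e0); exists z.
exists xs; last by move=> k; exact: (xsP k).1.
apply/cvgrPdist_lt => e e0; apply: filterS (near_infty_natSinv_lt (PosNum e0)) => n.
by apply: lt_trans; exact: (xsP n).2.
Qed.

Unset Implicit Arguments.

Theorem proposition2p8 (R : realType) (a b : R) (phi : R -> R) :
  a < b ->
  {within `]a, b[, continuous phi} ->
  {ae (@lebesgue_measure R), forall x, `]a, b[%classic x ->
     derivable phi x 1 \/
     ((exists xs : nat -> R,
         xs @ \oo --> x /\ (forall k, visc_subdiff a b phi (xs k) 0)) /\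
      lim_subdiff a b phi x 0)}.
Proof.
move=> _; rewrite continuous_open_subspace; last exact: itv_open.
move=> cphi; have {}cphi : {in `]a, b[, continuous phi} by move=> x xab; apply: cphi; rewrite inE.
apply: (negligibleS _ (negligible_not_derivable_off_closure cphi)) => x /= bad.
have xab : `]a, b[%classic x by apply: contrapT => nx; apply: bad => /nx.
split; last by move=> dx; apply: bad => _; left.
split => // /closure_cvg_seq[xs xsx Zxs]; apply: bad => _; right.
split; first by exists xs.
by exists xs, (fun=> 0); split => //; exact: cvg_cst.
Qed.
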